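(* Let $\chi_1,\chi_2,\chi_{1'},\chi_{2'}$ be triples of nonzero complex numbers that are the octahedral colors of the segments $1,2,1',2'$ at a crossing of an octahedral coloring. Then: - $U(\chi_1)U(\chi_2)=U(\chi_{2'})U(\chi_{1'})$; - $D(\chi_1)D(\chi_2)=D(\chi_{2'})D(\chi_{1'})$; - if the crossing is positive, $D(\chi_1)U(\chi_2)=U(\chi_{2'})D(\chi_{1'})$; - if the crossing is negative, $U(\chi_1)D(\chi_2)=D(\chi_{2'})U(\chi_{1'})$. Consequently the assignment $x_i^+\mapsto U(\chi_i)$, $x_i^-\mapsto D(\chi_i)$ gives a well-defined representation (functor) $\mathrm{Hol}_\chi$ of the fundamental groupoid $\Pi(D)$ into $\mathrm{GL}_2(\mathbb{C})$.
   Context: Tangle diagrams and labels: $D$ is an oriented tangle diagram, viewed as a 4-valent graph. Segments are the edges of the graph and regions are the components of the complement. For a segment $i$, $i^{\uparrow}$ and $i^{\downarrow}$ are the regions on the left and right of $i$ respectively, with respect to its orientation. At a crossing, rotated so both strands point right, the incoming segments are $1$ (upper left) and $2$ (lower left), and the outgoing segments are $1'$ (lower right, continuing $1$) and $2'$ (upper right, continuing $2$). The crossing is positive if strand $1\to1'$ is over and negative if strand $2\to2'$ is over. Octahedral coloring: assign to each segment a triple $(a_i,b_i,m_i)$ of nonzero complex numbers with $m_{1'}=m_1$, $m_{2'}=m_2$ at each crossing, and: - at positive crossings, with $A=1-\frac{m_1b_1}{b_2}(1-\frac{a_1}{m_1})(1-\frac{1}{m_2a_2})$: $a_{1'}=a_1A^{-1}$,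 $a_{2'}=a_2A$, $b_{1'}=\frac{m_2b_2}{m_1}(1-m_2a_2(1-\frac{b_2}{m_1b_1}))^{-1}$, $b_{2'}=b_1(1-\frac{m_1}{a_1}(1-\frac{b_2}{m_1b_1}))$; - at negative crossings, with $\tilde A=1-\frac{b_2}{m_1b_1}(1-m_1a_1)(1-\frac{m_2}{a_2})$: $a_{1'}=a_1\tilde A^{-1}$, $a_{2'}=a_2\tilde A$, $b_{1'}=\frac{m_2b_2}{m_1}(1-\frac{a_2}{m_2}(1-\frac{m_1b_1}{b_2}))$, $b_{2'}=b_1(1-\frac{1}{m_1a_1}(1-\frac{m_1b_1}{b_2}))^{-1}$. Matrices: for $\chi=(a,b,m)$, \[ U(\chi)=\begin{bmatrix}a&0\\(a-1/m)/b&1\end{bmatrix},\qquad D(\chi)=\begin{bmatrix}1&(a-m)b\\0&a\end{bmatrix}. \] Products are ordinary matrix products. Fundamental groupoid $\Pi(D)$: objects are the regions of $D$. There are two generating morphisms $x_i^+,x_i^-:i^{\uparrow}\to i^{\downarrow}$ for each segment $i$, representing paths passing over and under the segment respectively. Composition is written left to right ($fg$ means $f$ then $g$). At each crossing there are the relations $x_1^+x_2^+=x_{2'}^+x_{1'}^+$ and $x_1^-x_2^-=x_{2'}^-x_{1'}^-$, together with $x_1^-x_2^+=x_{2'}^+x_{1'}^-$ at a positive crossing, or $x_1^+x_2^-=x_{2'}^-x_{1'}^+$ at a negative crossing. A representation sends a composite $fg$ to the matrix product in the same order. *)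

From HB Require Import structures.
From mathcomp Require Import all_boot all_order all_algebra.
From mathcomp Require Import reals.
From mathcomp Require Import complex.
Set Implicit Arguments. Unset Strict Implicit. Unset Printing Implicit Defensive.
Import Order.TTheory GRing.Theory Num.Theory.
Local Open Scope ring_scope.

Record color (R : realType) := Color { ca : R[i]; cb : R[i]; cm : R[i] }.

Definition nonzero_color (R : realType) (x : color R) : Prop :=
  ca x != 0 /\ cb x != 0 /\ cm x != 0.

Definition Umx (R : realType) (x : color R) : 'M[R[i]]_2 :=
  \matrix_(i < 2, j < 2)
    (if (i == 0) && (j == 0) then ca x
     else if (i == 0) then 0
     else if (j == 0) then (ca x - (cm x)^-1) / cb x
     else 1).

Definition Dmx (R : realType) (x : color R) : 'M[R[i]]_2 :=
  \matrix_(i < 2, j < 2)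
    (if (i == 0) && (j == 0) then 1
     else if (i == 0) then (ca x - cm x) * cb x
     else if (j == 0) then 0
     else ca x).

(* Octahedral coloring relations at a positive crossing with incoming
   segments 1 (upper left), 2 (lower left), outgoing 1' (continuing 1),
   2' (continuing 2). *)
Definition pos_crossing_rel (R : realType) (x1 x2 x1' x2' : color R) : Prop :=
  let a1 := ca x1 in let b1 := cb x1 in let m1 := cm x1 in
  let a2 := ca x2 in let b2 := cb x2 in let m2 := cm x2 in
  let A := 1 - m1 * b1 / b2 * (1 - a1 / m1) * (1 - (m2 * a2)^-1) in
  [/\ cm x1' = m1 /\ cm x2' = m2,
      ca x1' = a1 * A^-1 /\ ca x2' = a2 * A,
      cb x1' = m2 * b2 / m1 * (1 - m2 * a2 * (1 - b2 / (m1 * b1)))^-1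
    & cb x2' = b1 * (1 - m1 / a1 * (1 - b2 / (m1 * b1)))].

Definition neg_crossing_rel (R : realType) (x1 x2 x1' x2' : color R) : Prop :=
  let a1 := ca x1 in let b1 := cb x1 in let m1 := cm x1 in
  let a2 := ca x2 in let b2 := cb x2 in let m2 := cm x2 in
  let At := 1 - b2 / (m1 * b1) * (1 - m1 * a1) * (1 - m2 / a2) in
  [/\ cm x1' = m1 /\ cm x2' = m2,
      ca x1' = a1 * At^-1 /\ ca x2' = a2 * At,
      cb x1' = m2 * b2 / m1 * (1 - a2 / m2 * (1 - m1 * b1 / b2))
    & cb x2' = b1 * (1 - (m1 * a1)^-1 * (1 - m1 * b1 / b2))^-1].

Definition octahedral_crossing (R : realType) (pos : bool)
    (x1 x2 x1' x2' : color R) : Prop :=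
  [/\ nonzero_color x1, nonzero_color x2, nonzero_color x1', nonzero_color x2'
    & if pos then pos_crossing_rel x1 x2 x1' x2'
      else neg_crossing_rel x1 x2 x1' x2'].

From HB Require Import structures.
From mathcomp Require Import all_boot all_order all_algebra.
From mathcomp Require Import reals complex ring.
Import GRing.Theory.
Local Open Scope ring_scope.

(* Each identity is an equality of 2x2 matrices whose entries are rational
   functions of the incoming colors; once the octahedral formulas for the
   outgoing colors are substituted, it is a field identity.  Its only content
   beyond normalisation is that the denominators created by those formulas do
   not vanish, and this is exactly what nonvanishing of the outgoing colors
   [a_1'], [b_1'], [b_2'] provides. *)

Definition mx2 {F : Type} (p q r s : F) : 'M[F]_2 :=
  \matrix_(i < 2, j < 2)
    if i == 0 then (if j == 0 then p else q) else (if j == 0 then r else s).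

Lemma mx2_mul (F : pzRingType) (p q r s p' q' r' s' : F) :
  mx2 p q r s *m mx2 p' q' r' s' =
  mx2 (p * p' + q * r') (p * q' + q * s') (r * p' + s * r') (r * q' + s * s').
Proof.
by apply/matrixP=> i j; rewrite !mxE !big_ord_recr big_ord0 /= !mxE add0r;
  case: (i == 0); case: (j == 0).
Qed.

Lemma det_mx2 (F : comPzRingType) (p q r s : F) :
  \det (mx2 p q r s) = p * s - q * r.
Proof.
rewrite (expand_det_row _ 0) !big_ord_recr big_ord0 /= add0r /cofactor.
rewrite !det_mx11 !mxE /=.
by rewrite expr0 expr1 mul1r mulN1r mulrN.
Qed.

Section Matrices.
Context {F : fieldType}.
Definition Umat (a b m : F) := mx2 a 0 ((a - m^-1) / b) 1.
Definition Dmat (a b m : F) := mx2 1 ((a - m) * b) 0 a.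

Lemma unitmx_Umat a b m : (Umat a b m \in unitmx) = (a != 0).
Proof. by rewrite unitmxE det_mx2 unitfE mulr1 mul0r subr0. Qed.
Lemma unitmx_Dmat a b m : (Dmat a b m \in unitmx) = (a != 0).
Proof. by rewrite unitmxE det_mx2 unitfE mul1r mulr0 subr0. Qed.
End Matrices.

Lemma UmxE (R : realType) (x : color R) : Umx x = Umat (ca x) (cb x) (cm x).
Proof. by apply/matrixP=> i j; rewrite !mxE; case: (i == 0); case: (j == 0). Qed.
Lemma DmxE (R : realType) (x : color R) : Dmx x = Dmat (ca x) (cb x) (cm x).
Proof. by apply/matrixP=> i j; rewrite !mxE; case: (i == 0); case: (j == 0). Qed.

Section PositiveCrossing.
Context {F : fieldType}.
Variables (a1 b1 m1 a2 b2 m2 a1' b1' a2' b2' : F).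
Hypotheses (a1_neq0 : a1 != 0) (b1_neq0 : b1 != 0) (m1_neq0 : m1 != 0)
           (a2_neq0 : a2 != 0) (b2_neq0 : b2 != 0) (m2_neq0 : m2 != 0).

Let A : F := 1 - m1 * b1 / b2 * (1 - a1 / m1) * (1 - (m2 * a2)^-1).
Let B : F := 1 - m2 * a2 * (1 - b2 / (m1 * b1)).
Let C : F := 1 - m1 / a1 * (1 - b2 / (m1 * b1)).
Hypotheses (def_a1' : a1' = a1 / A) (def_a2' : a2' = a2 * A)
  (def_b1' : b1' = m2 * b2 / m1 / B) (def_b2' : b2' = b1 * C).
Hypotheses (a1'_neq0 : a1' != 0) (b1'_neq0 : b1' != 0) (b2'_neq0 : b2' != 0).

Let inputs_neq0 :=
  (a1_neq0, b1_neq0, m1_neq0, a2_neq0, b2_neq0, m2_neq0).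

(* [field] states its side conditions in these denominator-free forms. *)
Let A_cleared : b2 * (m2 * a2) - b1 * (m1 - a1) * (m2 * a2 - 1) != 0.
Proof.
have -> : b2 * (m2 * a2) - b1 * (m1 - a1) * (m2 * a2 - 1) = A * (b2 * m2 * a2).
  by rewrite /A; field; rewrite ?inputs_neq0.
rewrite !mulf_neq0 //; apply: contra_neq a1'_neq0 => A0.
by rewrite def_a1' A0 invr0 mulr0.
Qed.

Let B_cleared : m1 * b1 - m2 * a2 * (m1 * b1 - b2) != 0.
Proof.
have -> : m1 * b1 - m2 * a2 * (m1 * b1 - b2) = B * (m1 * b1) by rewrite /B; field; rewrite ?inputs_neq0.
rewrite !mulf_neq0 //; apply: contra_neq b1'_neq0 => B0.
by rewrite def_b1' B0 invr0 mulr0.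
Qed.

Let C_cleared : a1 * b1 - (m1 * b1 - b2) != 0.
Proof.
have -> : a1 * b1 - (m1 * b1 - b2) = C * (a1 * b1) by rewrite /C; field; rewrite ?inputs_neq0.
rewrite !mulf_neq0 //; apply: contra_neq b2'_neq0 => C0.
by rewrite def_b2' C0 mulr0.
Qed.

Let neq0 := (inputs_neq0, A_cleared, B_cleared, C_cleared).

Lemma pos_crossing_Umat :
  Umat a1 b1 m1 *m Umat a2 b2 m2 = Umat a2' b2' m2 *m Umat a1' b1' m1.
Proof.
rewrite !mx2_mul def_a1' def_a2' def_b1' def_b2' /A /B /C; congr mx2.
all: by field; rewrite ?neq0.
Qed.

Lemma pos_crossing_Dmat :
  Dmat a1 b1 m1 *m Dmat a2 b2 m2 = Dmat a2' b2' m2 *m Dmat a1' b1' m1.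
Proof.
rewrite !mx2_mul def_a1' def_a2' def_b1' def_b2' /A /B /C; congr mx2.
all: by field; rewrite ?neq0.
Qed.

Lemma pos_crossing_DUmat :
  Dmat a1 b1 m1 *m Umat a2 b2 m2 = Umat a2' b2' m2 *m Dmat a1' b1' m1.
Proof.
rewrite !mx2_mul def_a1' def_a2' def_b1' def_b2' /A /B /C; congr mx2.
all: by field; rewrite ?neq0.
Qed.

End PositiveCrossing.

Section NegativeCrossing.
Context {F : fieldType}.
Variables (a1 b1 m1 a2 b2 m2 a1' b1' a2' b2' : F).
Hypotheses (a1_neq0 : a1 != 0) (b1_neq0 : b1 != 0) (m1_neq0 : m1 != 0)
           (a2_neq0 : a2 != 0) (b2_neq0 : b2 != 0) (m2_neq0 : m2 != 0).

Let A : F := 1 - b2 / (m1 * b1) * (1 - m1 * a1) * (1 - m2 / a2).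
Let B : F := 1 - a2 / m2 * (1 - m1 * b1 / b2).
Let C : F := 1 - (m1 * a1)^-1 * (1 - m1 * b1 / b2).
Hypotheses (def_a1' : a1' = a1 / A) (def_a2' : a2' = a2 * A)
  (def_b1' : b1' = m2 * b2 / m1 * B) (def_b2' : b2' = b1 / C).
Hypotheses (a1'_neq0 : a1' != 0) (b1'_neq0 : b1' != 0) (b2'_neq0 : b2' != 0).

Let inputs_neq0 :=
  (a1_neq0, b1_neq0, m1_neq0, a2_neq0, b2_neq0, m2_neq0).

Let A_cleared : m1 * b1 * a2 - b2 * (1 - m1 * a1) * (a2 - m2) != 0.
Proof.
have -> : m1 * b1 * a2 - b2 * (1 - m1 * a1) * (a2 - m2) = A * (m1 * b1 * a2).
  by rewrite /A; field; rewrite ?inputs_neq0.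
rewrite !mulf_neq0 //; apply: contra_neq a1'_neq0 => A0.
by rewrite def_a1' A0 invr0 mulr0.
Qed.

Let B_cleared : m2 * b2 - a2 * (b2 - m1 * b1) != 0.
Proof.
have -> : m2 * b2 - a2 * (b2 - m1 * b1) = B * (m2 * b2).
  by rewrite /B; field; rewrite ?inputs_neq0.
rewrite !mulf_neq0 //; apply: contra_neq b1'_neq0 => B0.
by rewrite def_b1' B0 mulr0.
Qed.

Let C_cleared : m1 * a1 * b2 - (b2 - m1 * b1) != 0.
Proof.
have -> : m1 * a1 * b2 - (b2 - m1 * b1) = C * (m1 * a1 * b2).
  by rewrite /C; field; rewrite ?inputs_neq0.
rewrite !mulf_neq0 //; apply: contra_neq b2'_neq0 => C0.
by rewrite def_b2' C0 invr0 mulr0.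
Qed.

Let neq0 := (inputs_neq0, A_cleared, B_cleared, C_cleared).

Lemma neg_crossing_Umat :
  Umat a1 b1 m1 *m Umat a2 b2 m2 = Umat a2' b2' m2 *m Umat a1' b1' m1.
Proof.
rewrite !mx2_mul def_a1' def_a2' def_b1' def_b2' /A /B /C; congr mx2.
all: by field; rewrite ?neq0.
Qed.

Lemma neg_crossing_Dmat :
  Dmat a1 b1 m1 *m Dmat a2 b2 m2 = Dmat a2' b2' m2 *m Dmat a1' b1' m1.
Proof.
rewrite !mx2_mul def_a1' def_a2' def_b1' def_b2' /A /B /C; congr mx2.
all: by field; rewrite ?neq0.
Qed.

Lemma neg_crossing_UDmat :
  Umat a1 b1 m1 *m Dmat a2 b2 m2 = Dmat a2' b2' m2 *m Umat a1' b1' m1.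
Proof.
rewrite !mx2_mul def_a1' def_a2' def_b1' def_b2' /A /B /C; congr mx2.
all: by field; rewrite ?neq0.
Qed.

End NegativeCrossing.

Lemma octahedral_crossing_pos (R : realType) (x1 x2 x1' x2' : color R) :
  octahedral_crossing true x1 x2 x1' x2' ->
  [/\ Umx x1 *m Umx x2 = Umx x2' *m Umx x1',
      Dmx x1 *m Dmx x2 = Dmx x2' *m Dmx x1'
    & Dmx x1 *m Umx x2 = Umx x2' *m Dmx x1'].
Proof.
case: x1 x2 x1' x2' => a1 b1 m1 [a2 b2 m2] [a1' b1' m1'] [a2' b2' m2'].
case=> [[/= ? [? ?]] [/= ? [? ?]] [/= ? [? _]] [/= _ [? _]]].
case=> /= [[-> ->] [? ?] ? ?]; rewrite !UmxE !DmxE /=.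
by split; [apply: pos_crossing_Umat | apply: pos_crossing_Dmat
          | apply: pos_crossing_DUmat].
Qed.

Lemma octahedral_crossing_neg (R : realType) (x1 x2 x1' x2' : color R) :
  octahedral_crossing false x1 x2 x1' x2' ->
  [/\ Umx x1 *m Umx x2 = Umx x2' *m Umx x1',
      Dmx x1 *m Dmx x2 = Dmx x2' *m Dmx x1'
    & Umx x1 *m Dmx x2 = Dmx x2' *m Umx x1'].
Proof.
case: x1 x2 x1' x2' => a1 b1 m1 [a2 b2 m2] [a1' b1' m1'] [a2' b2' m2'].
case=> [[/= ? [? ?]] [/= ? [? ?]] [/= ? [? _]] [/= _ [? _]]].
case=> /= [[-> ->] [? ?] ? ?]; rewrite !UmxE !DmxE /=.
by split; [apply: neg_crossing_Umat | apply: neg_crossing_Dmat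
          | apply: neg_crossing_UDmat].
Qed.

Lemma nonzero_color_unitmx (R : realType) (x : color R) :
  nonzero_color x -> Umx x \in unitmx /\ Dmx x \in unitmx.
Proof. by case=> a_neq0 _; rewrite UmxE DmxE unitmx_Umat unitmx_Dmat a_neq0. Qed.

Theorem lemma3p3 (R : realType) (pos : bool) (x1 x2 x1' x2' : color R) :
  octahedral_crossing pos x1 x2 x1' x2' ->
  [/\ Umx x1 *m Umx x2 = Umx x2' *m Umx x1',
      Dmx x1 *m Dmx x2 = Dmx x2' *m Dmx x1',
      (pos -> Dmx x1 *m Umx x2 = Umx x2' *m Dmx x1'),
      (~~ pos -> Umx x1 *m Dmx x2 = Dmx x2' *m Umx x1')
    & forall x, [\/ x = x1, x = x2, x = x1' | x = x2'] ->
        Umx x \in unitmx /\ Dmx x \in unitmx].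
Proof.
move=> cross.
have units x : [\/ x = x1, x = x2, x = x1' | x = x2'] ->
    Umx x \in unitmx /\ Dmx x \in unitmx.
  have [nz1 nz2 nz1' nz2' _] := cross.
  by case=> ->; apply: nonzero_color_unitmx.
by case: pos cross => [/octahedral_crossing_pos | /octahedral_crossing_neg] [].
Qed.
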